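(* Let $G$ be a finite nonabelian group such that $\{w(G): d\ge1,\ w\in F_d\}=\{\{1\},Z(G),G\}$, i.e. the only word images of $G$ are $\{1\}$, $Z(G)$ and $G$. Then $G$ is a special $p$-group for some prime $p$.
   Context: $F_d$ is the free group on $d$ letters; for $w\in F_d$, $w(G)$ is the image of the word map $G^d\to G$ given by evaluating $w$. A special $p$-group is a finite $p$-group whose center, derived subgroup and Frattini subgroup coincide and are elementary abelian. *)

From mathcomp Require Import all_boot all_fingroup all_solvable.
Set Implicit Arguments. Unset Strict Implicit. Unset Printing Implicit Defensive.
Local Open Scope group_scope.

(* A word in d letters x_0,...,x_{d-1}: a finite sequence of letters x_i^(+1)
   (sign false) or x_i^(-1) (sign true).  Every element of the free group F_d
   is represented by such a (syntactic) word, and the word map only depends on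
   the represented free group element, so word images over syntactic words are
   exactly the word images over F_d. *)
Definition word (d : nat) := seq ('I_d * bool).

Definition word_eval (gT : finGroupType) d (w : word d) (x : {ffun 'I_d -> gT}) : gT :=
  \prod_(l <- w) (if l.2 then (x l.1)^-1 else x l.1).

Definition word_image (gT : finGroupType) (G : {set gT}) d (w : word d) : {set gT} :=
  [set word_eval w x | x in [pred x : {ffun 'I_d -> gT} | [forall i, x i \in G]]].

Definition special_pgroup (gT : finGroupType) (p : nat) (G : {set gT}) : Prop :=
  [/\ p.-group G, special G & p.-abelem 'Z(G)].

From mathcomp Require Import all_boot all_fingroup all_solvable.
Local Open Scope group_scope.

(* Two specific words carry the whole argument: the power word
   x^q (one letter) and the commutator word [x, y] (two letters).
   - Their images are the power set {x^q | x in G} and the set of commutators.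
   - For a prime q dividing |G| the q-power map is not onto G (Cauchy gives a
     nontrivial element killed by q), so by the trichotomy its image lies in
     Z(G): every q-th power is central.
   - If two coprime primes p, q divided |G|, Bezout would make every element
     central, contradicting non-commutativity; hence G is a p-group, p the
     smallest prime divisor of |G|.
   - The commutator set is neither {1} (G is nonabelian) nor G (a nontrivial
     nilpotent group is not perfect), so it equals Z(G), hence G' = Z(G).
   - Finally Phi(G) = G' Mho^1(G) = Z(G), since p-th powers are central, so G
     is special; the center of a special group is elementary abelian. *)

Section WordImages.

Context {gT : finGroupType}.
Implicit Types G : {set gT}.

Definition power_word (n : nat) : word 1 := nseq n (ord0, false).

Definition commutator_word : word 2 :=
  [:: (ord0, true); (ord_max, true); (ord0, false); (ord_max, false)].

Lemma word_eval_power n (x : {ffun 'I_1 -> gT}) :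
  word_eval (power_word n) x = x ord0 ^+ n.
Proof.
rewrite /word_eval; elim: n => [|n IH]; first by rewrite big_nil.
by rewrite /= big_cons /= IH expgS.
Qed.

Lemma word_eval_commutator (x : {ffun 'I_2 -> gT}) :
  word_eval commutator_word x = [~ x ord0, x ord_max].
Proof.
by rewrite /word_eval !big_cons big_nil /= /commg /conjg !mulgA mulg1.
Qed.

Lemma word_imageP G d (w : word d) y :
  reflect (exists2 x : {ffun 'I_d -> gT}, (forall i, x i \in G) & y = word_eval w x)
          (y \in word_image G w).
Proof.
apply: (iffP imsetP) => [[x] | [x Gx ->]].
  by rewrite inE => /forallP Gx ->; exists x.
by exists x => //; rewrite inE; apply/forallP.
Qed.

Lemma power_word_image G n :
  word_image G (power_word n) = [set x ^+ n | x in G].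
Proof.
apply/setP=> y; apply/word_imageP/imsetP => [[x Gx ->] | [z Gz ->]].
  by exists (x ord0); rewrite ?word_eval_power.
exists [ffun=> z] => [i|]; first by rewrite ffunE.
by rewrite word_eval_power ffunE.
Qed.

Lemma commutator_word_image G :
  word_image G commutator_word = commg_set G G.
Proof.
apply/setP=> y; apply/word_imageP/imset2P => [[x Gx ->] | [a b Ga Gb ->]].
  by exists (x ord0) (x ord_max); rewrite ?word_eval_commutator.
exists [ffun i => if i == ord0 then a else b] => [i|].
  by rewrite ffunE; case: (i == ord0).
by rewrite word_eval_commutator !ffunE.
Qed.

End WordImages.

Section GroupFacts.

Context {gT : finGroupType}.
Implicit Types G H : {group gT}.

Lemma power_map_not_onto {G} {q} :
  prime q -> q %| #|G| -> [set x ^+ q | x in G] != G.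
Proof.
move=> q_pr qG; apply/eqP=> powG.
have /imset_injP inj_pow : #|[set x ^+ q | x in G]| == #|G| by rewrite powG.
have [y Gy oy] := Cauchy q_pr qG.
have y1 : y = 1 by apply: inj_pow; rewrite ?group1 //= expg1n -oy expg_order.
by move: q_pr; rewrite -oy y1 order1.
Qed.

Lemma coprime_powers_mem {H x m n} :
  (0 < m)%N -> coprime m n -> x ^+ m \in H -> x ^+ n \in H -> x \in H.
Proof.
move=> m_gt0 co_mn Hxm Hxn.
have [a _ /dvdnP[k def_k]] := Bezoutl n m_gt0.
rewrite (eqP co_mn) in def_k.
have Hx1 : x ^+ (1 + a * n) \in H by rewrite def_k mulnC expgM groupX.
have Hxa : x ^+ (a * n) \in H by rewrite mulnC expgM groupX.
by move: (groupM Hx1 (groupVr Hxa)); rewrite expgD expg1 mulgK.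
Qed.

Lemma central_powers_pgroup {G} :
  ~~ abelian G ->
  (forall q, prime q -> q %| #|G| -> forall x, x \in G -> x ^+ q \in 'Z(G)) ->
  (pdiv #|G|).-group G.
Proof.
move=> nabG powZ; set p := pdiv #|G|.
have ntG : G :!=: 1 by apply: contra nabG => /eqP->; apply: abelian1.
have p_pr : prime p by rewrite pdiv_prime ?cardG_gt1.
have p_dvd_G : p %| #|G| by rewrite pdiv_dvd.
apply/pnatP=> // q q_pr qG; rewrite inE; apply/negPn/negP => q_neq_p.
case/negP: nabG; apply: subset_trans (subsetIr G 'C(G)).
have co_pq : coprime p q by rewrite prime_coprime // dvdn_prime2 // eq_sym.
apply/subsetP=> x Gx.
by apply: (coprime_powers_mem (prime_gt0 p_pr) co_pq); apply: powZ.
Qed.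

Lemma derived_eq_center {G} :
  nilpotent G -> ~~ abelian G ->
  commg_set G G = 1 \/ commg_set G G = 'Z(G) \/ commg_set G G = G ->
  G^`(1) = 'Z(G).
Proof.
move=> nilG nabG; rewrite derg1; case=> [C1 | [CZ | CG]].
- case/negP: nabG; apply/centsP=> x Gx y Gy; apply/commgP/eqP.
  have : [~ x, y] \in commg_set G G by apply: imset2_f.
  by rewrite C1 => /set1P.
- by rewrite /commutator CZ genGid.
have ntG : G :!=: 1 by apply: contra nabG => /eqP->; apply: abelian1.
have sGG' : G \subset [~: G, G] by rewrite /commutator -{1}CG subset_gen.
have nGG : G \subset 'N_G(G) by rewrite subsetI subxx normG.
by have := nil_comm_properl nilG (subxx G) ntG nGG; rewrite properE sGG' andbF.
Qed.

(* A p-group whose derived subgroup is its center and whose p-th powers are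
   central is special: Phi(G) = G' Mho^1(G) = Z(G). *)
Lemma special_of_central_powers {p : nat} {G} :
  p.-group G -> G^`(1) = 'Z(G) -> (forall x, x \in G -> x ^+ p \in 'Z(G)) ->
  special G.
Proof.
move=> pG derZ powZ; split=> //.
rewrite (Phi_joing pG) (MhoE 1 pG) expn1 derZ; apply/joing_idPl.
by rewrite gen_subG; apply/subsetP=> _ /imsetP[x Gx ->]; apply: powZ.
Qed.

End GroupFacts.

Theorem theorem5p2 (gT : finGroupType) (G : {group gT}) :
  ~~ abelian G ->
  (forall S : {set gT},
     (exists d, exists w : word d, (0 < d)%N /\ word_image G w = S) <->
     (S = 1 \/ S = 'Z(G) \/ S = G)) ->
  exists p, prime p /\ special_pgroup p G.
Proof.
move=> nabG images.
have trichotomy d (w : word d) : (0 < d)%N ->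
    let S := word_image G w in S = 1 \/ S = 'Z(G) \/ S = G.
  by move=> d_gt0; apply/images; exists d, w.
have powZ q : prime q -> q %| #|G| -> forall x, x \in G -> x ^+ q \in 'Z(G).
  move=> q_pr qG x Gx; have := trichotomy 1%N (power_word q) isT.
  have xq_pow : x ^+ q \in [set y ^+ q | y in G] by apply: imset_f.
  rewrite /= power_word_image => -[pow1 | [powZG | powG]].
  - by move: xq_pow; rewrite pow1 => /set1P->; apply: group1.
  - by rewrite -powZG.
  by case/eqP: (power_map_not_onto q_pr qG).
have pG := central_powers_pgroup nabG powZ.
have ntG : G :!=: 1 by apply: contra nabG => /eqP->; apply: abelian1.
have p_pr : prime (pdiv #|G|) by rewrite pdiv_prime ?cardG_gt1.
have derZ : G^`(1) = 'Z(G).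
  apply: derived_eq_center (pgroup_nil pG) nabG _.
  by rewrite -commutator_word_image; apply: trichotomy.
have spG := special_of_central_powers pG derZ (powZ _ p_pr (pdiv_dvd _)).
by exists (pdiv #|G|); split=> //; split=> //; apply: center_special_abelem.
Qed.
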